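(* Let $A$ be a set and $X$ an analytic measurable space. Let $S\subseteq\mathbf{Meas}(X,2)$ be an at most countable set of measurable maps such that the constant map $1$ is in $S$ and $k\wedge l\in S$ whenever $k,l\in S$. Then $S$ is approximating: for every measurable $h\colon X\to2$ such that ($k(y)=k(y')$ for all $k\in S$) implies $h(y)=h(y')$, every $a\in A$, $r\in\mathbb{Q}\cap[0,1]$ and all $u=(\mu_b)_{b\in A},v=(\nu_b)_{b\in A}\in(\mathcal{G}_{\le1}X)^A$: if for all $k\in S$, $a'\in A$, $r'\in\mathbb{Q}\cap[0,1]$ one has $\mu_{a'}(k^{-1}(1))>r'\iff\nu_{a'}(k^{-1}(1))>r'$, then $\mu_a(h^{-1}(1))>r\iff\nu_a(h^{-1}(1))>r$.
   Context: $2=\{0,1\}$ with the discrete $\sigma$-algebra; $\mathcal{G}_{\le1}X$ is the space of subprobability measures on $X$. A Polish space is a separable completely metrizable topological space; an analytic topological space is the image of a continuous map between Polish spaces; an analytic measurable space is $(X,\sigma(\mathcal{O}_X))$ for an analytic topological space $(X,\mathcal{O}_X)$. *)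

From HB Require Import structures.
From mathcomp Require Import all_boot all_order all_algebra.
From mathcomp Require Import all_classical all_reals all_analysis.
Set Implicit Arguments. Unset Strict Implicit. Unset Printing Implicit Defensive.
Import Order.TTheory GRing.Theory Num.Theory.
Local Open Scope classical_set_scope.
Local Open Scope ring_scope.

Definition polish (R : realType) (P : topologicalType) : Prop :=
  (exists D : set P, countable D /\ dense D) /\
  exists d : P -> P -> R,
    [/\ (forall x y, 0 <= d x y) /\
        (forall x y, d x y = 0 <-> x = y),
        (forall x y, d x y = d y x),
        (forall x y z, d x z <= d x y + d y z),
        (forall U : set P, open U <->
           (forall x, U x -> exists2 e : R, 0 < e & [set y | d x y < e] `<=` U)) &
        (forall u : nat -> P,
           (forall e : R, 0 < e -> exists N, forall m n, (N <= m)%N -> (N <= n)%N -> d (u m) (u n) < e) ->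
           exists l : P, forall e : R, 0 < e -> exists N, forall n, (N <= n)%N -> d (u n) l < e)].

(* An analytic topological space: (homeomorphic to) the image f(P) of a
   continuous map f : P -> Q between Polish spaces, with the subspace topology
   inherited from Q. *)
Definition analytic_top (R : realType) (T : topologicalType) : Prop :=
  exists (P Q : topologicalType) (f : P -> Q) (e : T -> Q),
    [/\ polish R P /\ polish R Q, continuous f, injective e,
        range e = range f &
        (forall U : set T, open U <-> exists2 V : set Q, open V & U = e @^-1` V)].

Definition borel_of (T : ptopologicalType) := g_sigma_algebraType (@open T).

Definition approximating (R : realType) (A : Type) (d : measure_display)
    (X : measurableType d) (S : set (X -> bool)) : Prop :=
  forall h : X -> bool, measurable_fun setT h ->
  (forall y y' : X, (forall k, S k -> k y = k y') -> h y = h y') ->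
  forall (a : A) (r : rat), 0 <= r <= 1 ->
  forall u v : A -> subprobability X R,
    (forall k a' (r' : rat), S k -> 0 <= r' <= 1 ->
       ((ratr r')%:E < u a' (k @^-1` [set true]) <->
        (ratr r')%:E < v a' (k @^-1` [set true]))%E) ->
    ((ratr r)%:E < u a (h @^-1` [set true]) <->
     (ratr r)%:E < v a (h @^-1` [set true]))%E.

(* Write [B] for [h^-1(1)].  The rational-cut hypothesis makes [mu_a'] and [nu_a'] agree
   on the sets [k^-1(1)], [k \in S], which form a pi-system containing the whole space,
   so they agree on the sigma-algebra [<<s G >>] these sets generate.  It remains to
   squeeze [B], which is saturated for an enumeration [k_n] of [S], from inside by
   elements of [<<s G >>].  An analytic space is metrizable and a continuous image of a
   Polish space, so finite Borel measures on it are closed-regular and tight (with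
   sequentially compact sets).  Hence [B] contains, up to mass [eps], a closed set [C]
   inside a compact set on which every [k_n] is locally constant (closed inner
   approximations of [k_n^-1(1)] and of its complement); compactness then shows that
   the [k]-saturation of [C], a countable intersection of finite Boolean combinations of
   the [k_n^-1(1)], is still inside [B].  So [mu(B) <= nu(B) + eps], and symmetrically. *)

From HB Require Import structures.
From mathcomp Require Import all_boot all_order all_algebra.
From mathcomp Require Import all_classical all_reals all_analysis.
From mathcomp Require Import lra.
Import Order.TTheory GRing.Theory Num.Theory.
Local Open Scope classical_set_scope.
Local Open Scope ring_scope.

Definition metrizes {R : realType} {X : topologicalType} (d : X -> X -> R) :=
  [/\ (forall x y, 0 <= d x y), (forall x y, d x y = 0 <-> x = y),
  (forall x y, d x y = d y x), (forall x y z, d x z <= d x y + d y z) &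
  (forall U : set X, open U <->
     (forall x, U x -> exists2 e : R, 0 < e & [set y | d x y < e] `<=` U))].

Section Metrizes.
Context {R : realType} {X : topologicalType} {d : X -> X -> R} (md : metrizes d).

Lemma dist_ge0 x y : 0 <= d x y. Proof. by case: md. Qed.
Lemma dist_sym x y : d x y = d y x. Proof. by case: md. Qed.
Lemma dist_triangle x y z : d x z <= d x y + d y z. Proof. by case: md. Qed.
Lemma dist_xx x : d x x = 0. Proof. by case: md => _ h _ _ _; exact/h. Qed.
Lemma dist_eq0 x y : d x y = 0 -> x = y. Proof. by case: md => _ h _ _ _ /h. Qed.

Lemma metrizes_open (U : set X) : open U <->
  (forall x, U x -> exists2 e : R, 0 < e & [set y | d x y < e] `<=` U).
Proof. by case: md. Qed.

Lemma open_dball x r : open [set y | d x y < r].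
Proof.
apply/metrizes_open => y /= hy; exists (r - d x y); first by lra.
by move=> z /= hz; have := dist_triangle x y z; lra.
Qed.

Lemma nbhs_dball x {r} : 0 < r -> nbhs x [set y | d x y < r].
Proof. by move=> r0; apply: open_nbhs_nbhs; split; [exact: open_dball|rewrite /= dist_xx]. Qed.

Lemma closed_dist (A : set X) :
  (forall x, ~ A x -> exists2 r, 0 < r & forall y, d x y < r -> ~ A y) -> closed A.
Proof. by move=> hA; rewrite -openC; apply/metrizes_open => x /hA [r r0 hr]; exists r. Qed.

Lemma closure_dist {A : set X} {y r} : closure A y -> 0 < r -> exists2 z, A z & d y z < r.
Proof. by move=> clAy r0; have [z [Az yz]] := clAy _ (nbhs_dball y r0); exists z. Qed.

Lemma cvg_distP (u : nat -> X) l : u @ \oo --> l <->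
  forall e, 0 < e -> exists N, forall n, (N <= n)%N -> d l (u n) < e.
Proof.
split=> [ul e e0|hu B].
  by have [N _ hN] := ul _ (nbhs_dball l e0); exists N.
rewrite nbhsE => -[V [oV Vl] VB].
have [e e0 /subset_trans/(_ VB) eB] := (metrizes_open V).1 oV l Vl.
by have [N hN] := hu e e0; exists N => // n /hN /eB.
Qed.

Lemma metrizes_hausdorff : hausdorff_space X.
Proof.
move=> p q clpq; apply: dist_eq0; apply/eqP; rewrite eq_le dist_ge0 andbT leNgt.
apply/negP => pq; have r0 : 0 < d p q / 2 by lra.
have [z [pz qz]] := clpq _ _ (nbhs_dball p r0) (nbhs_dball q r0).
by have := dist_triangle p z q; rewrite (dist_sym z q) /= in pz qz *; lra.
Qed.

End Metrizes.

Lemma metrizes_embed {R : realType} {T Q : topologicalType} {d : Q -> Q -> R} {e : T -> Q} :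
  metrizes d -> injective e ->
  (forall U : set T, open U <-> exists2 V : set Q, open V & U = e @^-1` V) ->
  metrizes (fun x y => d (e x) (e y)).
Proof.
move=> md inje opT; split.
- by move=> x y; exact: dist_ge0.
- by move=> x y; split => [/(dist_eq0 md)/inje //|->]; exact: dist_xx.
- by move=> x y; exact: dist_sym.
- by move=> x y z; exact: dist_triangle.
move=> U; split.
  move=> /opT [V oV ->] x /= Vx.
  have [r r0 hr] := (metrizes_open md V).1 oV _ Vx.
  by exists r => // y /= hy; apply: hr.
move=> hU; apply/opT.
exists (\bigcup_(x in U) [set q | exists2 r, 0 < r /\ [set y | d (e x) (e y) < r] `<=` U
                                         & d (e x) q < r]).
  apply/(metrizes_open md) => q [x Ux [r [r0 sub] hq]].
  exists (r - d (e x) q); first by lra.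
  move=> q' /= hq'; exists x => //; exists r => //.
  by have := dist_triangle md (e x) q q'; lra.
apply/seteqP; split => y /=.
  by move=> Uy; have [r r0 hr] := hU y Uy; exists y => //; exists r; rewrite ?dist_xx.
by move=> [x Ux [r [r0 sub] hq]]; apply: sub.
Qed.

Definition dist_complete {R : realType} {X : Type} (d : X -> X -> R) :=
  forall u : nat -> X,
  (forall e : R, 0 < e -> exists N, forall m n, (N <= m)%N -> (N <= n)%N -> d (u m) (u n) < e) ->
  exists l : X, forall e : R, 0 < e -> exists N, forall n, (N <= n)%N -> d (u n) l < e.

Definition inv_succ {R : realType} (n : nat) : R := n.+1%:R^-1.

Lemma inv_succ_gt0 {R : realType} n : 0 < inv_succ n :> R.
Proof. by rewrite invr_gt0 ltr0n. Qed.

Lemma inv_succ_le {R : realType} {m n : nat} : (m <= n)%N -> inv_succ n <= inv_succ m :> R.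
Proof. by move=> mn; rewrite lef_pV2 ?posrE ?ltr0n // ler_nat. Qed.

Lemma inv_succ_lt {R : realType} {e : R} : 0 < e -> exists n, inv_succ n < e.
Proof.
by move=> e0; have [N _ hN] := near_infty_natSinv_lt (PosNum e0); exists N; apply: hN => /=.
Qed.

Definition unbounded (I : set nat) := forall N, exists2 j, (N <= j)%N & I j.

Lemma unboundedS {I J : set nat} : I `<=` J -> unbounded I -> unbounded J.
Proof. by move=> IJ hI N; have [j Nj /IJ] := hI N; exists j. Qed.

Lemma unboundedI_ge {I : set nat} N0 : unbounded I -> unbounded (I `&` [set j | (N0 <= j)%N]).
Proof.
move=> hI N; have [j hj Ij] := hI (maxn N N0).
by move: hj; rewrite geq_max => /andP[Nj N0j]; exists j.
Qed.

Lemma unbounded_pigeonhole {A : nat -> set nat} {m} {I : set nat} : unbounded I ->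
  (forall j, I j -> exists2 i, (i <= m)%N & A i j) ->
  exists2 i, (i <= m)%N & unbounded (I `&` A i).
Proof.
elim: m I => [|m IH] I hI cov.
  exists 0%N => // N; have [j Nj Ij] := hI N; exists j => //; split => //.
  by have [i] := cov j Ij; rewrite leqn0 => /eqP ->.
have [|/existsNP[N0 /forall2NP bdd]] := pselect (unbounded (I `&` A m.+1)).
  by exists m.+1.
have [j [Ij N0j]|i im] := IH (I `&` [set j | (N0 <= j)%N]) (unboundedI_ge N0 hI).
  have [i] := cov j Ij; rewrite leq_eqVlt => /orP[/eqP ->|].
    by case: (bdd j) => // /not_andP[].
  by exists i.
by move=> hi; exists i; [exact: leqW|apply: unboundedS hi => j [[]]].
Qed.

Lemma incr_seq_ge {sg : nat -> nat} : (forall n, (sg n < sg n.+1)%N) -> forall n, (n <= sg n)%N.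
Proof. by move=> sg_incr; elim=> [//|n IH]; exact: leq_ltn_trans IH (sg_incr n). Qed.

Section TotallyBoundedSubseq.
Context {R : realType} {X : topologicalType} {d : X -> X -> R}.
Hypotheses (md : metrizes d) (d_complete : dist_complete d).
Context {p : nat -> X} {W : nat -> set X} {m : nat -> nat}.
Hypothesis W_closed : forall n, closed (W n).
Hypothesis W_cover : forall n x, W n.+1 x -> exists2 i, (i <= m n)%N & d (p i) x <= inv_succ n.
Context {w : nat -> X}.
Hypothesis w_in : forall n j, (n <= j)%N -> W n (w j).

(* Diagonal argument: [nest n.+1] keeps infinitely many indices [j > n] whose [w j] lie
   in one ball of radius [inv_succ n], so [w] along increasing indices of the [nest]s
   is Cauchy. *)
Let near_center n i j := d (p i) (w j) <= inv_succ n.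

Let center n (I : set nat) := xget 0%N
  [set i | unbounded (I `&` [set j | (n < j)%N] `&` near_center n i)].

Fixpoint nest n : set nat :=
  if n is n'.+1 then nest n' `&` [set j | (n' < j)%N] `&` near_center n' (center n' (nest n'))
  else setT.

Lemma nest_unbounded n : unbounded (nest n).
Proof.
elim: n => [|n IH] /=; first by move=> N; exists N.
rewrite /center; case: xgetP => [i -> //|none].
have covered j : (nest n `&` [set j | (n < j)%N]) j ->
    exists2 i, (i <= m n)%N & near_center n i j.
  by move=> [_ nj]; apply: W_cover; exact: w_in.
have [i _ hi] := unbounded_pigeonhole (unboundedI_ge n.+1 IH) covered.
by have := none i.
Qed.

Lemma nest_decr {n k} : (n <= k)%N -> nest k `<=` nest n.
Proof. by move=> /subnK <-; elim: (k - n)%N => [|t IH] //= j [[/IH]]. Qed.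

Fixpoint subidx n : nat :=
  if n is n'.+1 then xget 0%N [set j | nest n'.+1 j /\ (subidx n' < j)%N] else 0%N.

Lemma subidx_spec n : nest n.+1 (subidx n.+1) /\ (subidx n < subidx n.+1)%N.
Proof.
rewrite [subidx n.+1]/=; case: xgetP => [j -> //|none].
by have [j hj Ij] := nest_unbounded n.+1 (subidx n).+1; exfalso; apply: (none j).
Qed.

Lemma subidx_in_nest n : nest n (subidx n).
Proof. by case: n => [//|n]; exact: (subidx_spec n).1. Qed.

Lemma subidx_incr n : (subidx n < subidx n.+1)%N.
Proof. exact: (subidx_spec n).2. Qed.

Lemma exists_cvg_subseq : exists2 sg : nat -> nat, (forall n, (sg n < sg n.+1)%N) &
  exists2 l, (forall n, W n l) & w \o sg @ \oo --> l.
Proof.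
exists subidx; first exact: subidx_incr.
have near_c n a : (n < a)%N -> d (p (center n (nest n))) (w (subidx a)) <= inv_succ n.
  by move=> na; have [_] := nest_decr na _ (subidx_in_nest a).
have [|l hl] := d_complete (w \o subidx).
  move=> e e0; have [n hn] : exists n, inv_succ n < e / 2 by apply: inv_succ_lt; lra.
  exists n.+1 => a b ha hb /=.
  have := near_c n a ha; have := near_c n b hb.
  have := dist_triangle md (w (subidx a)) (p (center n (nest n))) (w (subidx b)).
  by have := dist_sym md (w (subidx a)) (p (center n (nest n))); lra.
have wl : w \o subidx @ \oo --> l.
  by apply/(cvg_distP md) => e /hl [N hN]; exists N => n /hN; rewrite dist_sym.
exists l => // n; apply: (closed_cvg (W n) (W_closed n) _ l wl).
by exists n => // k nk; apply: w_in; exact: leq_trans nk (incr_seq_ge subidx_incr k).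
Qed.

End TotallyBoundedSubseq.

Section MeasureEstimates.
Context {disp : measure_display} {T : measurableType disp} {R : realType}.
Variable mu : {measure set T -> \bar R}.

Lemma measure_decr_le {F : nat -> set T} {e : R} : 0 < e -> (mu (F 0%N) < +oo)%E ->
  (forall n, measurable (F n)) -> nonincreasing_seq F -> \bigcap_n F n = set0 ->
  exists N, (mu (F N) <= e%:E)%E.
Proof.
move=> e0 F0fin mF decrF capF.
have := nonincreasing_cvg_mu F0fin mF (bigcapT_measurable mF) decrF.
rewrite capF measure0 => /fine_cvgP[finF /cvgrPdist_lt/(_ e e0) small].
have [N _ hN] := (near_andP _ _ _).2 (conj finF small).
have [/= fin lt] := hN N (leqnn N).
exists N; rewrite -(fineK fin) lee_fin ltW //; move: lt; rewrite /= sub0r normrN.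
by apply: le_lt_trans; exact: ler_norm.
Qed.

Lemma measure_bigcup_le_eps {F : nat -> set T} {e : R} : 0 <= e ->
  (forall n, measurable (F n)) -> (forall n, (mu (F n) <= (e / (2 ^ n.+1)%:R)%:E)%E) ->
  (mu (\bigcup_n F n) <= e%:E)%E.
Proof.
move=> e0 mF hF; apply: le_trans (generalized_Boole_inequality mu mF (bigcupT_measurable _ mF)) _.
apply: le_trans (epsilon_trick0 xpredT e0).
by apply: lee_nneseries => [n _ _|n _]; [exact: measure_ge0|exact: hF].
Qed.

Lemma measure_setD_bigcapI_le (B K C : set T) (F : nat -> set T) (e : R) : 0 <= e ->
  measurable B -> measurable K -> measurable C -> (forall n, measurable (F n)) ->
  (mu (~` K) <= (e / 3)%:E)%E -> (mu (B `\` C) <= (e / 3)%:E)%E ->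
  (forall n, (mu (~` F n) <= (e / 3 / (2 ^ n.+1)%:R)%:E)%E) ->
  (mu (B `\` (K `&` C `&` \bigcap_n F n)) <= e%:E)%E.
Proof.
move=> e0 mB mK mC mF muK muC muF.
have mFC : measurable (\bigcup_n ~` F n) by apply: bigcupT_measurable => n; exact: measurableC.
apply: (@le_trans _ _ (mu (~` K `|` ((B `\` C) `|` \bigcup_n ~` F n)))).
  apply: le_measure; rewrite ?inE.
  - by apply: measurableD => //; apply: measurableI; [exact: measurableI|exact: bigcapT_measurable].
  - by apply: measurableU; [exact: measurableC|apply: measurableU => //; exact: measurableD].
  move=> x [Bx nKCF]; have [Kx|] := pselect (K x); last by left.
  have [Cx|] := pselect (C x); last by right; left.
  right; right; apply/not_notP => nF; apply: nKCF; split => // n _.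
  by apply/not_notP => nFn; apply: nF; exists n.
apply: le_trans (measureU2 mu (measurableC mK) (measurableU _ _ (measurableD mB mC) mFC)) _.
have muFC : (mu (\bigcup_n ~` F n) <= (e / 3)%:E)%E.
  apply: measure_bigcup_le_eps => [|n|n]; [exact: divr_ge0|exact: measurableC|exact: muF].
apply: le_trans (leeD muK (le_trans (measureU2 mu (measurableD mB mC) mFC) (leeD muC muFC))) _.
by rewrite -!EFinD lee_fin; lra.
Qed.

End MeasureEstimates.

Lemma open_measurable_borel {T : ptopologicalType} {U : set T} :
  open U -> measurable (U : set (borel_of T)).
Proof. exact: sub_sigma_algebra. Qed.

Lemma closed_measurable_borel {T : ptopologicalType} {C : set T} :
  closed C -> measurable (C : set (borel_of T)).
Proof. by rewrite -openC => /open_measurable_borel/measurableC; rewrite setCK. Qed.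

Section ClosedRegular.
Context {R : realType} {T : ptopologicalType} {d : T -> T -> R} (md : metrizes d).
Local Notation BT := (borel_of T).
Variable mu : {measure set BT -> \bar R}.
Hypothesis mu_fin : (mu setT < +oo)%E.

Lemma measure_lt_pinfty {A : set BT} : measurable A -> (mu A < +oo)%E.
Proof. by move=> mA; apply: le_lt_trans mu_fin; apply: le_measure; rewrite ?inE. Qed.

Definition closed_regular (D : set T) := forall e : R, 0 < e -> exists C : set T,
  [/\ closed C, C `<=` D & (mu (D `\` C) <= e%:E)%E].

Lemma closed_regular_closed (C : set T) : closed C -> closed_regular C.
Proof. by move=> Ccl e e0; exists C; split => //; rewrite setDv measure0 lee_fin ltW. Qed.

Lemma closed_regular_open (U : set T) : open U -> closed_regular U.
Proof.
move=> oU e e0.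
pose C n := [set x | forall y, ~ U y -> inv_succ n <= d x y].
have Ccl n : closed (C n).
  apply: (closed_dist md) => x /existsNP[y /not_implyP[nUy /negP]].
  rewrite -ltNge => xy; exists (inv_succ n - d x y); first by lra.
  move=> z xz /(_ y nUy); have := dist_triangle md z x y.
  by rewrite (dist_sym md z x); lra.
have mF n : measurable ((U `\` C n) : set BT).
  by apply: measurableD; [exact: open_measurable_borel|exact: closed_measurable_borel].
have decrF : nonincreasing_seq (fun n => U `\` C n).
  apply/nonincreasing_seqP => n; apply/subsetPset => x [Ux nCx]; split => // Cx.
  by apply: nCx => y /Cx; apply: le_trans; exact: inv_succ_le.
have capF : \bigcap_n (U `\` C n) = set0.
  apply/seteqP; split => // x Fx; have [Ux _] := Fx 0%N I.
  have [r r0 rU] := (metrizes_open md U).1 oU x Ux.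
  have [n rn] := inv_succ_lt r0; have [_] := Fx n I; apply => y nUy.
  by rewrite leNgt; apply/negP => xy; apply: nUy; apply: rU => /=; lra.
have [N hN] := measure_decr_le mu e0 (measure_lt_pinfty (mF 0%N)) mF decrF capF.
exists (C N); split => // x CNx; apply/not_notP => /CNx.
by rewrite dist_xx // leNgt inv_succ_gt0.
Qed.

Lemma closed_regular_bigcap (E : nat -> set T) : (forall n, measurable (E n : set BT)) ->
  (forall n, closed_regular (E n)) -> closed_regular (\bigcap_n E n).
Proof.
move=> mE hE e e0.
have pos n : 0 < e / (2 ^ n.+1)%:R by rewrite divr_gt0 // ltr0n expn_gt0.
have [C hC] := choice (fun n => hE n _ (pos n)).
exists (\bigcap_n C n); split.
- by apply: closed_bigI => n _; case: (hC n).
- by move=> x Cx n _; case: (hC n) => _ + _; apply; exact: Cx.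
have mC n : measurable (C n : set BT) by case: (hC n) => /closed_measurable_borel.
have muEC : (mu (\bigcup_n (E n `\` C n)) <= e%:E)%E.
  by apply: (measure_bigcup_le_eps mu (ltW e0)) => n; [exact: measurableD|case: (hC n)].
apply: le_trans muEC; apply: le_measure; rewrite ?inE.
- by apply: measurableD; exact: bigcapT_measurable.
- by apply: bigcupT_measurable => n; exact: measurableD.
move=> x [Ex /existsNP[n /not_implyP[_ nCx]]]; exists n => //; split => //.
exact: Ex.
Qed.

Lemma closed_regular_bigcup (D : nat -> set T) : (forall n, measurable (D n : set BT)) ->
  (forall n, closed_regular (D n)) -> closed_regular (\bigcup_n D n).
Proof.
move=> mD hD e e0; have e2 : 0 < e / 2 by lra.
have pos n : 0 < e / 2 / (2 ^ n.+1)%:R by rewrite divr_gt0 // ltr0n expn_gt0.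
have [C hC] := choice (fun n => hD n _ (pos n)).
have mC n : measurable (C n : set BT) by case: (hC n) => /closed_measurable_borel.
pose G N := \bigcup_n D n `\` \bigcup_(n in `I_N) D n.
have mU : measurable (\bigcup_n D n : set BT) by exact: bigcupT_measurable.
have mG N : measurable (G N : set BT).
  by apply: measurableD => //; apply: bigcup_measurable => n _.
have decrG : nonincreasing_seq G.
  apply/nonincreasing_seqP => N; apply/subsetPset => x [Ux nDx]; split => // -[n nN Dx].
  by apply: nDx; exists n => //; exact: ltnW.
have capG : \bigcap_N G N = set0.
  apply/seteqP; split => // x GNx; have [[n _ Dx] _] := GNx 0%N I.
  by have [_] := GNx n.+1 I; apply; exists n => /=.
have [N hN] := measure_decr_le mu e2 (measure_lt_pinfty (mG 0%N)) mG decrG capG.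
exists (\bigcup_(n in `I_N) C n); split.
- by apply: closed_bigcup; [exact: finite_II|move=> n _; case: (hC n)].
- by move=> x [n _ Cx]; exists n => //; case: (hC n) => _ + _; apply.
apply: (@le_trans _ _ (mu (G N `|` \bigcup_n (D n `\` C n)))).
  apply: le_measure; rewrite ?inE.
  - apply: measurableD => //; exact: bigcup_measurable.
  - by apply: measurableU => //; apply: bigcupT_measurable => n; exact: measurableD.
  move=> x [Ux nCx]; have [[n nN Dx]|] := pselect ((\bigcup_(n in `I_N) D n) x); last by left.
  by right; exists n => //; split => // Cx; apply: nCx; exists n.
apply: le_trans (measureU2 mu (mG N) _) _.
  by apply: bigcupT_measurable => n; exact: measurableD.
rewrite [e](splitr e) EFinD leeD //.
apply: (measure_bigcup_le_eps mu (ltW e2)) => n; first exact: measurableD.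
by case: (hC n).
Qed.

Lemma closed_regular_measurable {D : set BT} : measurable D -> closed_regular D.
Proof.
pose M := [set A : set T | measurable (A : set BT) /\ closed_regular A /\ closed_regular (~` A)].
suff : <<s open >> `<=` M by move=> + mD => /(_ D mD) [_ []].
apply: smallest_sub => [|U oU]; last first.
  split; first exact: open_measurable_borel.
  by split; [exact: closed_regular_open|apply: closed_regular_closed; exact: open_closedC].
split.
- split; first exact: measurable0.
  by rewrite setC0; split; [exact: closed_regular_closed closed0|exact: closed_regular_open openT].
- move=> A [mA [hA hAC]]; rewrite setTD; split; first exact: measurableC.
  by rewrite setCK.
- move=> F hF; split; first by apply: bigcupT_measurable => n; case: (hF n).
  split; first by apply: closed_regular_bigcup => n; case: (hF n) => // _ [].
  rewrite setC_bigcup; apply: closed_regular_bigcap => n; case: (hF n) => mF [_ ?] //.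
  exact: measurableC.
Qed.

Lemma closed_regular_partition {D : set BT} : measurable D -> forall e : R, 0 < e ->
  exists C1 C0 : set T,
    [/\ closed C1, closed C0, C1 `<=` D, C0 `<=` ~` D & (mu (~` (C1 `|` C0)) <= e%:E)%E].
Proof.
move=> mD e e0; have e2 : 0 < e / 2 by lra.
have [C1 [C1cl C1D muC1]] := closed_regular_measurable mD _ e2.
have [C0 [C0cl C0D muC0]] := closed_regular_measurable (measurableC mD) _ e2.
exists C1, C0; split => //.
have [mC1 mC0] := (closed_measurable_borel C1cl, closed_measurable_borel C0cl).
apply: (@le_trans _ _ (mu ((D `\` C1) `|` (~` D `\` C0)))).
  apply: le_measure; rewrite ?inE.
  - by apply: measurableC; exact: measurableU.
  - by apply: measurableU; apply: measurableD => //; exact: measurableC.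
  by move=> x /not_orP[nC1 nC0]; have [Dx|nDx] := pselect (D x); [left|right].
apply: le_trans (measureU2 mu _ _) _; try by apply: measurableD => //; exact: measurableC.
by rewrite [e](splitr e) EFinD leeD.
Qed.

End ClosedRegular.

Definition seq_compact {X : topologicalType} (K : set X) :=
  forall u : nat -> X, (forall n, K (u n)) ->
  exists2 sg : nat -> nat, (forall n, (sg n < sg n.+1)%N) &
    exists2 l, K l & u \o sg @ \oo --> l.

Section Tightness.
Context {R : realType} {T : ptopologicalType} {dT : T -> T -> R} (mT : metrizes dT).
Context {P : topologicalType} {dP : P -> P -> R}.
Hypotheses (mP : metrizes dP) (P_complete : dist_complete dP).
Variable phi : P -> T.
Hypotheses (phi_cont : continuous phi) (phi_surj : forall y, exists p, phi p = y).
Variable c : nat -> P.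
Hypothesis c_dense : forall x r, 0 < r -> exists i, dP (c i) x < r.
Local Notation BT := (borel_of T).
Variable mu : {measure set BT -> \bar R}.
Hypothesis mu_fin : (mu setT < +oo)%E.
Variable e : R.
Hypothesis e0 : 0 < e.

Definition cover (m : nat) (r : R) := [set x | exists2 i, (i <= m)%N & dP (c i) x <= r].

Lemma closed_cover m r : closed (cover m r).
Proof.
have -> : cover m r = \bigcup_(i in `I_m.+1) [set x | dP (c i) x <= r].
  by apply/seteqP; split => x [i im h]; exists i.
apply: closed_bigcup => [|i _]; first exact: finite_II.
apply: (closed_dist mP) => x /negP; rewrite -ltNge => rx.
exists (dP (c i) x - r) => [|y xy]; first by lra.
by have := dist_triangle mP (c i) y x; rewrite (dist_sym mP y x) /=; lra.
Qed.

Lemma cover_nondecr m r : cover m r `<=` cover m.+1 r.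
Proof. by move=> x [i im h]; exists i => //; exact: leqW. Qed.

Lemma bigcup_cover r : 0 < r -> \bigcup_m cover m r = setT.
Proof.
move=> r0; apply/seteqP; split => // x _.
by have [i hi] := c_dense x r r0; exists i => //; exists i => //; exact: ltW.
Qed.

Let t := (fine (mu setT) - e)%:E.

(* Choquet's capacity argument: heaviness passes from [layer n] to [layer n.+1], which
   lies in finitely many balls of radius [inv_succ n], and survives in the limit [core],
   a closed sequentially compact set of measure at least [t]. *)
Definition heavy (Z : set P) :=
  forall D : set T, measurable (D : set BT) -> phi @` Z `<=` D -> (t < mu D)%E.

Lemma heavyS {Z Z' : set P} : Z `<=` Z' -> heavy Z -> heavy Z'.
Proof.
by move=> ZZ' hZ D mD Z'D; apply: hZ => // _ [p Zp <-]; apply: Z'D; exists p; [exact: ZZ'|].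
Qed.

Lemma heavyT : heavy setT.
Proof.
move=> D mD TD; have -> : D = setT :> set BT.
  by apply/seteqP; split => // y _; have [p <-] := phi_surj y; apply: TD; exists p.
have fin : mu setT \is a fin_num by rewrite ge0_fin_numE ?measure_ge0.
by rewrite /t -[X in (_ < X)%E](fineK fin) lte_fin ltrBlDr ltrDl.
Qed.

Lemma heavy_bigcup_nondecr {Z : nat -> set P} : (forall m, Z m `<=` Z m.+1) ->
  heavy (\bigcup_m Z m) -> exists m, heavy (Z m).
Proof.
move=> Z_nondecr hZ; apply/not_notP => none.
have light m : exists D : set T,
    [/\ measurable (D : set BT), phi @` Z m `<=` D & (mu D <= t)%E].
  apply/not_notP => h; apply: none; exists m => D mD ZD; rewrite ltNge; apply/negP => Dt.
  by apply: h; exists D.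
have [D hD] := choice light.
have ZS m j : (m <= j)%N -> Z m `<=` Z j.
  by move=> /subnK <-; elim: (j - m)%N => [//|k IH] x /IH; exact: Z_nondecr.
pose H m := \bigcap_(j in [set j | (m <= j)%N]) D j.
have mH m : measurable (H m : set BT).
  by apply: bigcap_measurable; [exists m => /= |move=> j _; case: (hD j)].
have Ht m : (mu (H m) <= t)%E.
  apply: le_trans (_ : mu (D m) <= t)%E; last by case: (hD m).
  apply: le_measure; rewrite ?inE; [exact: mH|by case: (hD m)|].
  by move=> x; apply => /=.
have H_nondecr : nondecreasing_seq H.
  by apply/nondecreasing_seqP => n; apply/subsetPset => x Hx j /= nj; apply: Hx => /=; exact: ltnW.
have cvgH := @nondecreasing_cvg_mu _ _ _ mu H mH (bigcupT_measurable _ mH) H_nondecr.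
have : (t < mu (\bigcup_m H m))%E.
  apply: hZ; first exact: bigcupT_measurable.
  move=> _ [p [m _ Zp] <-]; exists m => // j /= mj.
  by case: (hD j) => _ + _; apply; exists p => //; exact: ZS mj _ Zp.
rewrite ltNge => /negP; apply; rewrite -(cvg_lim _ cvgH) //.
by apply: lime_le; [apply/cvg_ex; eexists; exact: cvgH|exact: nearW].
Qed.

Definition next_index (W : set P) (n : nat) :=
  xget 0%N [set m | heavy (W `&` cover m (inv_succ n))].

Fixpoint layer n : set P :=
  if n is n'.+1 then layer n' `&` cover (next_index (layer n') n') (inv_succ n') else setT.

Lemma layer_heavy n : heavy (layer n).
Proof.
elim: n => [|n IH] /=; first exact: heavyT.
rewrite /next_index; case: xgetP => [m -> //|none]; exfalso.
have nondecr m : layer n `&` cover m (inv_succ n) `<=` layer n `&` cover m.+1 (inv_succ n).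
  by move=> x [Wx Ux]; split => //; exact: cover_nondecr.
have heavy_union : heavy (\bigcup_m (layer n `&` cover m (inv_succ n))).
  apply: heavyS IH => x Wx; rewrite -setI_bigcupr bigcup_cover //; exact: inv_succ_gt0.
by have [m hm] := heavy_bigcup_nondecr nondecr heavy_union; apply: (none m).
Qed.

Lemma closed_layer n : closed (layer n).
Proof. by elim: n => [|n IH] /=; [exact: closedT|apply: closedI => //; exact: closed_cover]. Qed.

Lemma layer_decr {n k} : (n <= k)%N -> layer k `<=` layer n.
Proof. by move=> /subnK <-; elim: (k - n)%N => [|j IH] //= x [/IH]. Qed.

Lemma layer_cover n x : layer n.+1 x ->
  exists2 i, (i <= next_index (layer n) n)%N & dP (c i) x <= inv_succ n.
Proof. by case. Qed.

Definition core := \bigcap_n closure (phi @` layer n).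

Lemma closed_core : closed core.
Proof. by apply: closed_bigI => n _; exact: closed_closure. Qed.

Lemma core_image {y} : core y -> exists2 l, (forall n, layer n l) & phi l = y.
Proof.
move=> coy.
have approx n : exists w, layer n w /\ dT y (phi w) < inv_succ n.
  by have [_ [w Ww <-] yw] := closure_dist mT (coy n I) (inv_succ_gt0 n); exists w.
have [w hw] := choice approx.
have w_in n j : (n <= j)%N -> layer n (w j) by move=> /layer_decr; apply; case: (hw j).
have [sg sg_incr [l hl wl]] := exists_cvg_subseq mP P_complete closed_layer layer_cover w_in.
exists l => //; apply: (cvg_unique (metrizes_hausdorff mT) (cvg_comp _ _ wl (phi_cont l))).
apply/(cvg_distP mT) => r r0; have [N hN] := inv_succ_lt r0.
exists N => n Nn; apply: lt_le_trans (proj2 (hw (sg n))) _; apply: le_trans (ltW hN).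
exact/inv_succ_le/(leq_trans Nn)/incr_seq_ge.
Qed.

Lemma core_measure : (mu (~` core) <= e%:E)%E.
Proof.
pose K n := closure (phi @` layer n).
have mK n : measurable (K n : set BT) by apply: closed_measurable_borel; exact: closed_closure.
have tK n : (t < mu (K n))%E by apply: layer_heavy => //; exact: subset_closure.
have K_decr : nonincreasing_seq K.
  apply/nonincreasing_seqP => n; apply/subsetPset.
  by apply/closureS/image_subset/layer_decr.
have cvgK := nonincreasing_cvg_mu (measure_lt_pinfty mu mu_fin (mK 0%N)) mK
  (bigcapT_measurable mK) K_decr.
have t_core : (t <= mu core)%E.
  rewrite -(cvg_lim _ cvgK) //; apply: lime_ge; first by apply/cvg_ex; eexists; exact: cvgK.
  by apply: nearW => n; exact/ltW/tK.
have mcore : measurable (core : set BT) by exact: closed_measurable_borel closed_core.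
have fin_core : mu core \is a fin_num.
  by rewrite ge0_fin_numE ?measure_ge0 // (measure_lt_pinfty mu mu_fin mcore).
have fin : mu setT \is a fin_num by rewrite ge0_fin_numE ?measure_ge0.
have -> : mu (~` core) = (mu [set: BT] - mu core)%E by rewrite -setTD measureD // setTI.
rewrite -(fineK fin) -(fineK fin_core) -EFinB lee_fin.
by move: t_core; rewrite /t -(fineK fin_core) lee_fin; lra.
Qed.

Lemma core_seq_compact : seq_compact core.
Proof.
move=> u u_core.
have lift n : exists l, (forall k, layer k l) /\ phi l = u n.
  by have [l ? ?] := core_image (u_core n); exists l.
have [v hv] := choice lift.
have [sg sg_incr [x hx vx]] :=
  exists_cvg_subseq mP P_complete closed_layer layer_cover (fun n j _ => (hv j).1 n).
exists sg => //; exists (phi x); first by move=> n _; apply: subset_closure; exists x.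
have -> : u \o sg = phi \o (v \o sg) by apply/funext => n /=; rewrite (hv (sg n)).2.
exact: cvg_comp _ _ vx (phi_cont x).
Qed.

End Tightness.

Lemma measure_tight_seq_compact {R : realType} {T : ptopologicalType} {dT : T -> T -> R}
    {P : topologicalType} {dP : P -> P -> R} (phi : P -> T) (c : nat -> P)
    (mu : {measure set borel_of T -> \bar R}) :
  metrizes dT -> metrizes dP -> dist_complete dP ->
  continuous phi -> (forall y, exists p, phi p = y) ->
  (forall x r, 0 < r -> exists i, dP (c i) x < r) -> (mu setT < +oo)%E ->
  forall e : R, 0 < e -> exists K : set T, [/\ closed K, seq_compact K & (mu (~` K) <= e%:E)%E].
Proof.
move=> mT mP P_complete phi_cont phi_surj c_dense mu_fin e e0.
exists (core (dP := dP) phi c mu e); split.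
- exact: closed_core.
- exact: (core_seq_compact mT mP P_complete _ phi_cont).
- exact: core_measure phi_surj c c_dense mu mu_fin e e0.
Qed.

Lemma near_split_closed {X : topologicalType} {D C1 C0 : set X} {u : nat -> X} {l} :
  closed C1 -> closed C0 -> C1 `<=` D -> C0 `<=` ~` D ->
  (forall j, (C1 `|` C0) (u j)) -> (C1 `|` C0) l -> u @ \oo --> l ->
  \forall j \near \oo, D (u j) <-> D l.
Proof.
move=> C1cl C0cl C1D C0D uC [C1l|C0l] ul.
- have nC0l : ~ C0 l by move=> /C0D; apply; exact: C1D.
  have : \forall j \near \oo, ~ C0 (u j).
    exact: ul _ (open_nbhs_nbhs (conj (closed_openC C0cl) nC0l)).
  apply: filterS => j nC0.
  by split => _; [exact: C1D|case: (uC j) => // /C1D].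
- have nC1l : ~ C1 l by move=> /C1D; exact: C0D.
  have : \forall j \near \oo, ~ C1 (u j).
    exact: ul _ (open_nbhs_nbhs (conj (closed_openC C1cl) nC1l)).
  apply: filterS => j nC1.
  by split => [|/(C0D _ C0l)//]; case: (uC j) => // /C0D.
Qed.

Section SaturatedApprox.
Context {T : ptopologicalType}.
Local Notation BT := (borel_of T).
Variable G : set (set T).
Variable k : nat -> T -> bool.
Hypothesis G_k : forall n, G (k n @^-1` [set true]).
Local Notation GT := (g_sigma_algebraType G).

Definition cylinder_hull N (C : set T) :=
  [set x | exists2 c, C c & forall n, (n < N)%N -> k n x = k n c].

Lemma cylinder_hull_measurable N C : measurable (cylinder_hull N C : set GT).
Proof.
elim: N C => [|N IH] C.
  have [[c Cc]|noC] := pselect (exists c, C c).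
    by have -> : cylinder_hull 0 C = setT by apply/seteqP; split => // x _; exists c.
  have -> : cylinder_hull 0 C = set0 by apply/seteqP; split => // x [c Cc _]; apply: noC; exists c.
  exact: measurable0.
pose D := k N @^-1` [set true].
have mD : measurable (D : set GT) by apply: sub_sigma_algebra; exact: G_k.
suff -> : cylinder_hull N.+1 C =
    (D `&` cylinder_hull N (C `&` D)) `|` (~` D `&` cylinder_hull N (C `&` ~` D)).
  by apply: measurableU; apply: measurableI => //; exact: measurableC.
rewrite /D; apply/seteqP; split => x.
  move=> [c Cc xc]; have xcN := xc N (ltnSn N).
  have {}xc n : (n < N)%N -> k n x = k n c by move=> nN; apply: xc; exact: ltnW.
  case kx : (k N x); [left|right]; (split; [by rewrite /= kx|exists c => //]).
    by split => //; rewrite /= -xcN.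
  by split => //; rewrite /= -xcN kx.
case=> -[/= kx [c [Cc kc] xc]]; exists c => // n;
  rewrite ltnS leq_eqVlt => /orP[/eqP ->|/xc //].
  by rewrite kx kc.
by move/negP/negbTE: kx => ->; move/negP/negbTE: kc => ->.
Qed.

Lemma bigcap_cylinder_hull_measurable C : measurable (\bigcap_N cylinder_hull N C : set GT).
Proof. by apply: bigcapT_measurable => N; exact: cylinder_hull_measurable. Qed.

Definition closed_split n (C1 C0 : set T) :=
  [/\ closed C1, closed C0, C1 `<=` k n @^-1` [set true] & C0 `<=` ~` (k n @^-1` [set true])].

(* The closed splits make each [k n] locally constant on the compact set [C], so the
   points of [C] agreeing with [x] on ever longer prefixes accumulate at an [l] agreeing
   with [x] everywhere. *)
Lemma bigcap_cylinder_hull_sub {C K : set T} {C1 C0 : nat -> set T} :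
  closed C -> C `<=` K -> seq_compact K ->
  (forall n, closed_split n (C1 n) (C0 n)) -> (forall n, C `<=` C1 n `|` C0 n) ->
  \bigcap_N cylinder_hull N C `<=` [set x | exists2 l, C l & forall n, k n l = k n x].
Proof.
move=> Ccl CK Ksc hsplit CC x xC.
have [c hc] := choice (fun N => let: ex_intro2 c Cc xc := xC N I in ex_intro _ c (conj Cc xc)).
have [sg sg_incr [l _ cl]] := Ksc _ (fun N => CK _ (hc N).1).
have Cl : C l by apply: (closed_cvg C Ccl _ l cl); apply: nearW => j; exact: (hc _).1.
exists l => // n; have [C1cl C0cl C1k C0k] := hsplit n.
have [J _ near_l] :=
  near_split_closed C1cl C0cl C1k C0k (fun j => CC n _ (hc (sg j)).1) (CC n _ Cl) cl.
pose j := maxn J n.+1.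
have nsg : (n < sg j)%N by apply: leq_trans (incr_seq_ge sg_incr j); exact: leq_maxr.
rewrite ((hc (sg j)).2 n nsg); apply/esym/Bool.eq_true_iff_eq.
by apply: (near_l j); exact: leq_maxl.
Qed.

Context {R : realType} {dT : T -> T -> R} (mT : metrizes dT).
Hypothesis G_meas : G `<=` (measurable : set (set BT)).
Variable mu : {measure set BT -> \bar R}.
Hypothesis mu_fin : (mu setT < +oo)%E.
Hypothesis mu_tight : forall e : R, 0 < e -> exists K : set T,
  [/\ closed K, seq_compact K & (mu (~` K) <= e%:E)%E].

Lemma sigma_G_measurable : <<s G >> `<=` (measurable : set (set BT)).
Proof. exact: smallest_sub (sigma_algebra_measurable BT) G_meas. Qed.

(* [C] below is a closed subset of [B], of a compact set and of closed splits of all the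
   [k n], with [mu (B `\` C)] small; its [k]-saturation lies in [B] and in [<<s G >>]. *)
Lemma saturated_inner_approx {B : set BT} : measurable B ->
  (forall x y, (forall n, k n x = k n y) -> B x -> B y) ->
  forall e : R, 0 < e -> exists E : set T,
    [/\ <<s G >> E, E `<=` B & (mu B <= mu E + e%:E)%E].
Proof.
move=> mB B_sat e e0; have e3 : 0 < e / 3 by lra.
have [K [Kcl Ksc muK]] := mu_tight _ e3.
have [CB [CBcl CBB muCB]] := closed_regular_measurable mT mu mu_fin mB _ e3.
have splits n : exists CC : set T * set T, closed_split n CC.1 CC.2 /\
    (mu (~` (CC.1 `|` CC.2)) <= (e / 3 / (2 ^ n.+1)%:R)%:E)%E.
  have mk : measurable (k n @^-1` [set true] : set BT) by exact: G_meas.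
  have pos : 0 < e / 3 / (2 ^ n.+1)%:R by rewrite divr_gt0 // ltr0n expn_gt0.
  have [C1 [C0 [? ? ? ? ?]]] := closed_regular_partition mT mu mu_fin mk _ pos.
  by exists (C1, C0).
have [CC hCC] := choice splits.
pose C := K `&` CB `&` \bigcap_n ((CC n).1 `|` (CC n).2).
have Ccl : closed C.
  apply: closedI; first exact: closedI.
  by apply: closed_bigI => n _; have [[? ? _ _] _] := hCC n; exact: closedU.
have CB_sub : C `<=` B by move=> x [[_ /CBB]].
have CE : C `<=` \bigcap_N cylinder_hull N C by move=> x Cx N _; exists x.
exists (\bigcap_N cylinder_hull N C); split.
- exact: bigcap_cylinder_hull_measurable.
- have C_CC n : C `<=` (CC n).1 `|` (CC n).2 by move=> y [_ /(_ n I)].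
  move=> x /(bigcap_cylinder_hull_sub Ccl (fun y Cy => Cy.1.1) Ksc (fun n => (hCC n).1) C_CC).
  by case=> l Cl kl; apply: B_sat kl _; exact: CB_sub.
have mC : measurable (C : set BT) := closed_measurable_borel Ccl.
have mCC n : measurable ((CC n).1 `|` (CC n).2 : set BT).
  by have [[? ? _ _] _] := hCC n; apply: measurableU; exact: closed_measurable_borel.
rewrite (measureDI mu mB mC) (setIidr CB_sub) addeC; apply: leeD.
  apply: le_measure; rewrite ?inE //; apply: sigma_G_measurable.
  exact: bigcap_cylinder_hull_measurable.
apply: measure_setD_bigcapI_le (ltW e0) mB _ (closed_measurable_borel CBcl) mCC muK muCB _.
- exact: closed_measurable_borel Kcl.
- by move=> n; case: (hCC n).
Qed.

End SaturatedApprox.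

Lemma dense_seq {R : realType} {X : topologicalType} {d : X -> X -> R} (md : metrizes d)
    {D : set X} : countable D -> dense D -> (exists x : X, True) ->
  exists c : nat -> X, forall x r, 0 < r -> exists i, d (c i) x < r.
Proof.
move=> cD dD [x0 _].
have [D0|/surjfunPex[c D_c]] := pfcard_geP cD.
  have [z [_]] := dD setT (ex_intro _ x0 I) openT; by rewrite D0.
exists c => x r r0.
have xx : d x x < r by rewrite dist_xx.
have [z [xz Dz]] := dD _ (ex_intro _ x xx) (open_dball md x r).
by move: Dz; rewrite D_c => -[i _ ciz]; exists i; rewrite dist_sym // ciz.
Qed.

Lemma continuous_factor {P T Q : topologicalType} {f : P -> Q} {emb : T -> Q} :
  continuous f -> injective emb -> range emb = range f ->
  (forall U : set T, open U <-> exists2 V : set Q, open V & U = emb @^-1` V) ->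
  exists2 phi : P -> T, continuous phi & forall y, exists p, phi p = y.
Proof.
move=> f_cont emb_inj range_eq emb_open.
have lift p : exists x, emb x = f p.
  have : range emb (f p) by rewrite range_eq; exists p.
  by case=> x _ xp; exists x.
have [phi phiE] := choice lift.
exists phi.
  apply/continuousP => _ /emb_open[V oV ->].
  have -> : phi @^-1` (emb @^-1` V) = f @^-1` V by apply/seteqP; split => p /=; rewrite phiE.
  by move/continuousP : f_cont; apply.
move=> y; have [p _ fp] : range f (emb y) by rewrite -range_eq; exists y.
by exists p; apply: emb_inj; rewrite phiE.
Qed.

Lemma analytic_tight {R : realType} {T : ptopologicalType} : analytic_top R T ->
  exists2 dT : T -> T -> R, metrizes dT &
  forall mu : {measure set borel_of T -> \bar R}, (mu setT < +oo)%E ->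
  forall e : R, 0 < e -> exists K : set T,
    [/\ closed K, seq_compact K & (mu (~` K) <= e%:E)%E].
Proof.
case=> P [Q [f [emb [[polP polQ] f_cont emb_inj range_eq emb_open]]]].
case: polP => [[D [cD dD]] [dP [[dP0 dPeq] dPsym dPtri dPop P_complete]]].
case: polQ => [_ [dQ [[dQ0 dQeq] dQsym dQtri dQop _]]].
have mP : metrizes dP by split.
have mQ : metrizes dQ by split.
have mT := metrizes_embed mQ emb_inj emb_open.
have [phi phi_cont phi_surj] := continuous_factor f_cont emb_inj range_eq emb_open.
exists (fun x y => dQ (emb x) (emb y)) => // mu mu_fin e e0.
have [[p0 _]|noP] := pselect (exists p : P, True).
  have [c c_dense] := dense_seq mP cD dD (ex_intro _ p0 I).
  exact: measure_tight_seq_compact mT mP P_complete phi_cont phi_surj c_dense mu_fin e e0.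
exists set0; split; [exact: closed0|by move=> u /(_ 0%N)[]|].
suff -> : ~` set0 = set0 :> set (borel_of T) by rewrite measure0 lee_fin ltW.
by rewrite setC0; apply/seteqP; split => // y _; have [p _] := phi_surj y; apply: noP; exists p.
Qed.

Lemma eq_rat_cuts {R : realType} (x y : \bar R) :
  (0 <= x <= 1)%E -> (0 <= y <= 1)%E ->
  (forall r : rat, 0 <= r <= 1 -> ((ratr r)%:E < x <-> (ratr r)%:E < y)%E) -> x = y.
Proof.
have sep (s t : R) : 0 <= s -> t <= 1 -> s < t ->
    ~ forall r : rat, 0 <= r <= 1 -> ((ratr r)%:E < s%:E <-> (ratr r)%:E < t%:E)%E.
  move=> s0 t1 st cuts; have [q] := rat_in_itvoo st; rewrite in_itv /= => /andP[sq qt].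
  have q0 : 0 <= q by rewrite -(ler_rat R) rmorph0; lra.
  have q1 : q <= 1 by rewrite -(ler_rat R) rmorph1; lra.
  have q01 : 0 <= q <= 1 by rewrite q0 q1.
  by have := (cuts q q01).2; rewrite !lte_fin => /(_ qt); lra.
have real (z : \bar R) : (0 <= z)%E -> (z <= 1)%E -> exists a : R, z = a%:E.
  by move=> z0 z1; exists (fine z); rewrite fineK // ge0_fin_numE // (le_lt_trans z1) ?ltry.
move=> /andP[x0 x1] /andP[y0 y1] cuts.
have [a xa] := real x x0 x1; have [b yb] := real y y0 y1.
move: x0 x1 y0 y1 cuts; rewrite xa yb !lee_fin => a0 a1 b0 b1 cuts.
congr (_%:E); apply/eqP; rewrite eq_le !leNgt; apply/andP; split; apply/negP => lt.
  by apply: (sep b a) => // r /cuts; case.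
exact: (sep a b).
Qed.

Lemma measurable_preimage_true {d} {X : measurableType d} {k : X -> bool} :
  measurable_fun setT k -> measurable (k @^-1` [set true]).
Proof. by move=> mk; rewrite -[_ @^-1` _]setTI; exact: mk measurableT [set true] I. Qed.

Lemma subprobability_eq_sigma {d} {X : measurableType d} {R : realType}
    {S : set (X -> bool)} {m1 m2 : subprobability X R} :
  (forall k, S k -> measurable_fun setT k) -> S (fun _ => true) ->
  (forall k l, S k -> S l -> S (fun x => k x && l x)) ->
  (forall k (r : rat), S k -> 0 <= r <= 1 ->
     ((ratr r)%:E < m1 (k @^-1` [set true]) <-> (ratr r)%:E < m2 (k @^-1` [set true]))%E) ->
  forall E, <<s [set k @^-1` [set true] | k in S] >> E -> m1 E = m2 E.
Proof.
move=> Sm S1 SI cuts.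
have Gm : [set k @^-1` [set true] | k in S] `<=` measurable.
  by move=> _ [k Sk <-]; exact/measurable_preimage_true/Sm.
have unit_range (m : subprobability X R) A : measurable A -> (0 <= m A <= 1)%E.
  move=> mA; rewrite measure_ge0 /=; apply: (le_trans _ (@sprobability_setT _ _ _ m)).
  by apply: le_measure; rewrite ?inE.
apply: (g_sigma_algebra_measure_unique _ Gm (fun _ => setT)).
- by move=> _; exists (fun _ => true) => //; apply/seteqP.
- by apply/seteqP; split => // x _; exists 0%N.
- move=> _ _ [k Sk <-] [l Sl <-]; exists (fun x => k x && l x); first exact: SI.
  by apply/seteqP; split => x /=; [move/andP|case=> -> ->].
- move=> _ [k Sk <-]; have mk := measurable_preimage_true (Sm k Sk).
  by apply: eq_rat_cuts; [exact: unit_range|exact: unit_range|move=> r; exact: cuts].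
- by move=> _; apply: le_lt_trans (@sprobability_setT _ _ _ m1) _; exact: ltry.
Qed.

Lemma saturated_measure_le {R : realType} {T : ptopologicalType} (G : set (set T))
    (k : nat -> T -> bool) (m1 m2 : {measure set borel_of T -> \bar R}) :
  analytic_top R T -> G `<=` (measurable : set (set (borel_of T))) ->
  (forall n, G (k n @^-1` [set true])) ->
  (m1 setT < +oo)%E -> (forall E, <<s G >> E -> m1 E = m2 E) ->
  forall B : set (borel_of T), measurable B ->
  (forall x y, (forall n, k n x = k n y) -> B x -> B y) -> (m1 B <= m2 B)%E.
Proof.
move=> hT G_meas G_k m1_fin m12 B mB B_sat.
have [dT mT tight] := analytic_tight hT.
apply/lee_addgt0Pr => e e0.
have [E [GE EB m1BE]] :=
  saturated_inner_approx G k G_k mT G_meas m1 m1_fin (tight m1 m1_fin) mB B_sat e e0.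
apply: le_trans m1BE _; apply: leeD => //; rewrite m12 //.
by apply: le_measure; rewrite ?inE //; exact: sigma_G_measurable G_meas E GE.
Qed.

Theorem mainTheorem9 (R : realType) (A : Type) (T : ptopologicalType)
  (hT : analytic_top R T) (S : set (borel_of T -> bool)) :
  countable S ->
  (forall k, S k -> measurable_fun setT k) ->
  S (fun _ => true) ->
  (forall k l, S k -> S l -> S (fun x => k x && l x)) ->
  approximating R A S.
Proof.
move=> cS Sm S1 SI h hm h_sat a r _ u v uv.
have [S0|/surjfunPex[k S_k]] := pfcard_geP cS; first by move: S1; rewrite S0.
pose G := [set k @^-1` [set true] | k in S].
have G_meas : G `<=` (measurable : set (set (borel_of T))).
  by move=> _ [l Sl <-]; apply: measurable_preimage_true; exact: Sm.
have G_k n : G (k n @^-1` [set true]) by exists (k n) => //; rewrite S_k; exists n.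
have h_sat' x y : (forall n, k n x = k n y) -> h x = true -> h y = true.
  by move=> kxy; rewrite (h_sat x y) // => l; rewrite S_k => -[n _ <-].
have fin (m : subprobability (borel_of T) R) : (m setT < +oo)%E.
  by apply: le_lt_trans (@sprobability_setT _ _ _ m) _; exact: ltry.
have uv_eq := subprobability_eq_sigma Sm S1 SI (fun l r' Sl hr => uv l a r' Sl hr).
have vu_eq := subprobability_eq_sigma Sm S1 SI (fun l r' Sl hr => iff_sym (uv l a r' Sl hr)).
have mh := measurable_preimage_true hm.
suff -> : u a (h @^-1` [set true]) = v a (h @^-1` [set true]) by [].
by apply/le_anti/andP; split;
  [exact: saturated_measure_le G k _ _ hT G_meas G_k (fin _) uv_eq _ mh h_sat'
  |exact: saturated_measure_le G k _ _ hT G_meas G_k (fin _) vu_eq _ mh h_sat'].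
Qed.
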